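(* Let $G$ be a group and let $A\subseteq \operatorname{Aut}(G)$ be a subgroup of automorphisms, and regard $G$ as an $\mathcal{L}(A)$-group. Then $G$ is an $\mathcal{L}(A)$-equational domain if and only if there do not exist $a,b\in G$ with $a\neq 1$, $b\neq 1$ such that $[a,\phi(b)]=1$ for every $\phi\in A$.
   Context: $\mathcal{L}(A)=\{\cdot,{}^{-1},1\}\cup\{\phi\mid \phi\in A\}$ is the group language extended by unary function symbols, one for each $\phi\in A$, interpreted in $G$ as the automorphism $\phi$. An $\mathcal{L}(A)$-term in variables $X=\{x_1,\dots,x_n\}$ is a term of this language; up to equivalence it is a product $\phi_1(x_{i_1}^{\varepsilon_1})\cdots\phi_k(x_{i_k}^{\varepsilon_k})$ with $\phi_j\in A$, $\varepsilon_j\in\{-1,1\}$. An $\mathcal{L}(A)$-equation is $t(X)=1$ for an $\mathcal{L}(A)$-term $t$; an $\mathcal{L}(A)$-system is any set of such equations, and $V_G(S)\subseteq G^n$ denotes its solution set. A subset of $G^n$ is $\mathcal{L}(A)$-algebraic if it equals $V_G(S)$ for some $\mathcal{L}(A)$-system $S$ in $n$ variables. $G$ is an $\mathcal{L}(A)$-equational domain if for every $n$ and all $\mathcal{L}(A)$-algebraic $Y_1,Y_2\subseteq G^n$, the union $Y_1\cup Y_2$ is $\mathcal{L}(A)$-algebraic. Here $[x,y]=x^{-1}y^{-1}xy$. *)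

From mathcomp Require Import ssreflect ssrfun ssrbool eqtype ssrnat fintype.
Set Implicit Arguments. Unset Strict Implicit.

Record group := Group {
  carrier :> Type;
  gmul : carrier -> carrier -> carrier;
  ginv : carrier -> carrier;
  gone : carrier;
  gmulA : forall x y z, gmul x (gmul y z) = gmul (gmul x y) z;
  gmul1 : forall x, gmul gone x = x;
  gmulV : forall x, gmul (ginv x) x = gone
}.

Definition comm (G : group) (x y : G) : G :=
  gmul (gmul (gmul (ginv x) (ginv y)) x) y.

Definition is_aut (G : group) (phi : G -> G) : Prop :=
  (forall x y, phi (gmul x y) = gmul (phi x) (phi y)) /\ bijective phi.

Definition aut_subgroup (G : group) (A : (G -> G) -> Prop) : Prop :=
  [/\ forall phi, A phi -> is_aut phi,
      A (fun x => x),
      forall phi psi, A phi -> A psi -> A (phi \o psi)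
    & forall phi, A phi -> exists2 psi, A psi & cancel phi psi /\ cancel psi phi].

(* L(A)-terms in the variables x_0, ..., x_{n-1}: function symbols are
   the group operations and one unary symbol for each phi in A. *)
Inductive LTerm (G : group) (A : (G -> G) -> Prop) (n : nat) : Type :=
  | TVar of 'I_n
  | TOne
  | TMul of LTerm A n & LTerm A n
  | TInv of LTerm A n
  | TApp (phi : {f : G -> G | A f}) of LTerm A n.

Fixpoint teval (G : group) (A : (G -> G) -> Prop) (n : nat) (p : 'I_n -> G)
    (t : LTerm A n) : G :=
  match t with
  | TVar i => p i
  | TOne => gone G
  | TMul t1 t2 => gmul (teval p t1) (teval p t2)
  | TInv t1 => ginv (teval p t1)
  | TApp phi t1 => proj1_sig phi (teval p t1)
  end.

(* An L(A)-system S is a set of equations t = 1 (identified with the set of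
   terms t); V_G(S) is its solution set in G^n. *)
Definition VG (G : group) (A : (G -> G) -> Prop) (n : nat)
    (S : LTerm A n -> Prop) : ('I_n -> G) -> Prop :=
  fun p => forall t, S t -> teval p t = gone G.

Definition algebraic (G : group) (A : (G -> G) -> Prop) (n : nat)
    (Y : ('I_n -> G) -> Prop) : Prop :=
  exists S : LTerm A n -> Prop, forall p, Y p <-> VG S p.

Definition equational_domain (G : group) (A : (G -> G) -> Prop) : Prop :=
  forall (n : nat) (Y1 Y2 : ('I_n -> G) -> Prop),
    algebraic A Y1 -> algebraic A Y2 ->
    algebraic A (fun p => Y1 p \/ Y2 p).

(** If [a] and [b] are nontrivial and [a] commutes with every [phi b], then the
    elements commuting with the whole [A]-orbit of [a] and the elements commuting
    with all of those form two [A]-closed subgroups centralizing each other, with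
    [b] in the first and [a] in the second.  Multiplication of such subgroups is
    a homomorphism of [L(A)]-structures, so every system solved by [(a, 1)] and
    by [(1, b)] is solved by [(a, b)]: the union of the two coordinate axes is not
    algebraic.  Conversely, if there are no such pairs, [V(S1) \/ V(S2)] is the
    solution set of the system of all [[t1, phi t2]] with [t1] in [S1], [t2] in
    [S2] and [phi] in [A]. *)

From mathcomp Require Import ssreflect ssrfun ssrbool eqtype ssrnat fintype.
From Stdlib Require Import Classical.

Set Implicit Arguments.
Unset Strict Implicit.

Section GroupFacts.
Variable G : group.
Local Notation "x * y" := (gmul x y).
Local Notation "x ^-1" := (ginv x).
Local Notation one := (gone G).

Lemma mulgV (x : G) : x * x^-1 = one.
Proof.
rewrite -[x * _]gmul1 -[in X in X * _](gmulV (x^-1)).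
by rewrite -gmulA [x^-1 * _]gmulA gmulV gmul1 gmulV.
Qed.

Lemma mulg1 (x : G) : x * one = x.
Proof. by rewrite -(gmulV x) gmulA mulgV gmul1. Qed.

Lemma mulKg (x y : G) : x^-1 * (x * y) = y.
Proof. by rewrite gmulA gmulV gmul1. Qed.

Lemma invg_unique (x y : G) : x * y = one -> y = x^-1.
Proof. by move=> xy1; rewrite -(mulKg x y) xy1 mulg1. Qed.

Lemma invMg (x y : G) : (x * y)^-1 = y^-1 * x^-1.
Proof.
symmetry; apply: invg_unique.
by rewrite -gmulA [y * _]gmulA mulgV gmul1 mulgV.
Qed.

Lemma invgK (x : G) : (x^-1)^-1 = x.
Proof. by symmetry; apply: invg_unique; rewrite gmulV. Qed.

Definition commute (u v : G) := u * v = v * u.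

Lemma commute_sym u v : commute u v -> commute v u.
Proof. by []. Qed.

Lemma commute1 u : commute u one.
Proof. by rewrite /commute gmul1 mulg1. Qed.

Lemma commuteM u v w : commute u v -> commute u w -> commute u (v * w).
Proof. by rewrite /commute => uv uw; rewrite gmulA uv -gmulA uw gmulA. Qed.

Lemma commuteV u v : commute u v -> commute u v^-1.
Proof.
rewrite /commute => uv.
have : v^-1 * (u * v) * v^-1 = v^-1 * (v * u) * v^-1 by rewrite uv.
by rewrite mulKg -[v^-1 * (u * v) * _]gmulA -[(u * v) * _]gmulA mulgV mulg1 => ->.
Qed.

Lemma comm_eq1 u v : comm u v = one <-> commute u v.
Proof.
rewrite /comm /commute; split => [uv1 | uv].
- have uv_inv : (u^-1 * v^-1) * (u * v) = one by rewrite !gmulA.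
  by rewrite (invg_unique uv_inv) invMg !invgK.
- by rewrite -gmulA uv !gmulA -[u^-1 * v^-1 * v]gmulA gmulV mulg1 gmulV.
Qed.

Lemma aut1 (phi : G -> G) : is_aut phi -> phi one = one.
Proof.
case=> phiM _.
have idem : phi one * phi one = phi one by rewrite -phiM gmul1.
by rewrite -(mulKg (phi one) (phi one)) idem gmulV.
Qed.

Lemma aut_commute (phi : G -> G) u v :
  is_aut phi -> commute u v -> commute (phi u) (phi v).
Proof. by case=> phiM _; rewrite /commute -!phiM => ->. Qed.

End GroupFacts.

Section LAStructure.
Variables (G : group) (A : (G -> G) -> Prop).
Hypothesis hA : aut_subgroup A.
Local Notation "x * y" := (gmul x y).
Local Notation "x ^-1" := (ginv x).
Local Notation one := (gone G).

Lemma A_aut phi : A phi -> is_aut phi.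
Proof. by case: hA => Aaut _ _ _; apply: Aaut. Qed.

Lemma A_inv phi : A phi -> exists2 psi, A psi & cancel phi psi /\ cancel psi phi.
Proof. by case: hA => _ _ _ Ainv; apply: Ainv. Qed.

Definition A_invariant (X : G -> Prop) := forall phi x, A phi -> X x -> X (phi x).

Definition A_closed (P : G -> Prop) :=
  [/\ P one, forall x y, P x -> P y -> P (x * y), forall x, P x -> P x^-1
    & A_invariant P].

Definition centralizer (X : G -> Prop) (v : G) := forall x, X x -> commute x v.

Definition orbit (a : G) (x : G) := exists2 phi, A phi & x = phi a.

Lemma orbit_invariant a : A_invariant (orbit a).
Proof.
case: hA => _ _ Acomp _ phi _ Aphi [psi Apsi ->].
by exists (phi \o psi); first exact: Acomp.
Qed.

Lemma centralizer_A_closed X : A_invariant X -> A_closed (centralizer X).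
Proof.
move=> Xinv; split.
- by move=> x _; apply: commute1.
- by move=> u v cu cv x Xx; apply: commuteM; [apply: cu | apply: cv].
- by move=> v cv x Xx; apply: commuteV; apply: cv.
- move=> phi v Aphi cv x Xx.
  have [psi Apsi [_ phiK]] := A_inv Aphi.
  rewrite -(phiK x); apply: aut_commute (A_aut Aphi) _.
  exact: cv (Xinv _ _ Apsi Xx).
Qed.

Lemma teval_closed P n (p : 'I_n -> G) (t : LTerm A n) :
  A_closed P -> (forall i, P (p i)) -> P (teval p t).
Proof.
case=> P1 PM PV Pinv Pp; elim: t => //= [t1 IH1 t2 IH2 | t1 IH1 | [phi Aphi] t1 IH1].
- exact: PM.
- exact: PV.
- exact: Pinv.
Qed.

Lemma teval_mul P1 P2 n (p pa pb : 'I_n -> G) (t : LTerm A n) :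
  A_closed P1 -> A_closed P2 -> (forall u v, P1 u -> P2 v -> commute u v) ->
  (forall i, P1 (pa i)) -> (forall i, P2 (pb i)) ->
  (forall i, p i = pa i * pb i) ->
  teval p t = teval pa t * teval pb t.
Proof.
move=> cP1 cP2 P12 P1pa P2pb pE.
have commute_eval (t1 t2 : LTerm A n) : commute (teval pa t1) (teval pb t2).
  by apply: P12; apply: teval_closed.
elim: t => /= [i | | t1 -> t2 -> | t1 -> | [phi Aphi] t1 ->].
- exact: pE.
- by rewrite gmul1.
- by rewrite -!gmulA [teval pb t1 * _]gmulA -commute_eval -gmulA.
- rewrite invMg; apply: commuteV; apply: commute_sym; apply: commuteV.
  exact: commute_eval.
- by case: (A_aut Aphi) => phiM _ /=; rewrite phiM.
Qed.

Definition point2 (x y : G) (i : 'I_2) : G := if i == ord0 then x else y.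

Section ZeroDivisors.
Variables a b : G.
Hypothesis ab1 : forall phi, A phi -> comm a (phi b) = one.

Let Q := centralizer (orbit a).
Let R := centralizer Q.

Lemma Q_A_closed : A_closed Q.
Proof. exact/centralizer_A_closed/orbit_invariant. Qed.

Lemma R_A_closed : A_closed R.
Proof. by apply: centralizer_A_closed; case: Q_A_closed. Qed.

Lemma a_in_R : R a.
Proof. by case: hA => _ Aid _ _ v Qv; apply/commute_sym/Qv; exists id. Qed.

Lemma b_in_Q : Q b.
Proof.
move=> _ [phi Aphi ->].
have [psi Apsi [_ phiK]] := A_inv Aphi.
rewrite -(phiK b); apply: aut_commute (A_aut Aphi) _.
exact/comm_eq1/ab1.
Qed.

Lemma VG_point2_mul (S : LTerm A 2 -> Prop) :
  VG S (point2 a one) -> VG S (point2 one b) -> VG S (point2 a b).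
Proof.
move=> Sa Sb t St.
rewrite (@teval_mul R Q _ _ (point2 a one) (point2 one b)).
- by rewrite Sa ?Sb ?gmul1.
- exact: R_A_closed.
- exact: Q_A_closed.
- by move=> u v Ru Qv; apply: commute_sym; apply: Ru.
- by move=> i; rewrite /point2; case: ifP => _; [apply: a_in_R | case: R_A_closed].
- by move=> i; rewrite /point2; case: ifP => _; [case: Q_A_closed | apply: b_in_Q].
- by move=> i; rewrite /point2; case: ifP => _; rewrite ?mulg1 ?gmul1.
Qed.

Lemma coord_axes_not_algebraic :
  a <> one -> b <> one ->
  ~ algebraic A (fun p : 'I_2 -> G => p ord0 = one \/ p ord_max = one).
Proof.
move=> a1 b1 [S axesE].
have Sa : VG S (point2 a one) by apply/axesE; right.
have Sb : VG S (point2 one b) by apply/axesE; left.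
by case/axesE: (VG_point2_mul Sa Sb).
Qed.

End ZeroDivisors.

Lemma algebraic_coord_eq1 n (i : 'I_n) : algebraic A (fun p => p i = one).
Proof.
exists (fun t => t = TVar A i) => p; split => [pi1 _ -> // | VGp].
exact: (VGp (TVar A i)).
Qed.

Lemma not_equational_domain a b :
  a <> one -> b <> one -> (forall phi, A phi -> comm a (phi b) = one) ->
  ~ equational_domain A.
Proof.
move=> a1 b1 ab1 ED.
exact: coord_axes_not_algebraic ab1 a1 b1
  (ED _ _ _ (algebraic_coord_eq1 ord0) (algebraic_coord_eq1 ord_max)).
Qed.

Definition tcomm n (t1 t2 : LTerm A n) : LTerm A n :=
  TMul (TMul (TMul (TInv t1) (TInv t2)) t1) t2.

Definition comm_system n (S1 S2 : LTerm A n -> Prop) (t : LTerm A n) :=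
  exists t1 t2 (phi : {f : G -> G | A f}), [/\ S1 t1, S2 t2 & t = tcomm t1 (TApp phi t2)].

Lemma VG_comm_system n (S1 S2 : LTerm A n -> Prop) p :
  VG S1 p \/ VG S2 p -> VG (comm_system S1 S2) p.
Proof.
move=> VGp _ [t1 [t2 [[phi Aphi] [S1t1 S2t2 ->]]]] /=; apply/comm_eq1.
case: VGp => [VG1 | VG2].
- by rewrite (VG1 t1 S1t1); apply: commute_sym; apply: commute1.
- by rewrite (VG2 t2 S2t2) (aut1 (A_aut Aphi)); apply: commute1.
Qed.

Lemma not_VG n (S : LTerm A n -> Prop) p :
  ~ VG S p -> exists2 t, S t & teval p t <> one.
Proof.
move=> nVG; apply: NNPP => noT; apply: nVG => t St.
by apply: NNPP => tp; apply: noT; exists t.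
Qed.

Section NoZeroDivisors.
Hypothesis noZD :
  forall a b, a <> one -> b <> one -> ~ (forall phi, A phi -> comm a (phi b) = one).

Lemma VG_comm_system_union n (S1 S2 : LTerm A n -> Prop) p :
  VG (comm_system S1 S2) p -> VG S1 p \/ VG S2 p.
Proof.
move=> VGp; apply: NNPP => /not_or_and[/not_VG[t1 S1t1 t1p] /not_VG[t2 S2t2 t2p]].
apply: noZD t1p t2p _ => phi Aphi.
by apply: (VGp (tcomm t1 (TApp (exist _ phi Aphi) t2))); exists t1, t2, (exist _ phi Aphi).
Qed.

Lemma equational_domain_of_no_zero_divisors : equational_domain A.
Proof.
move=> n Y1 Y2 [S1 Y1E] [S2 Y2E]; exists (comm_system S1 S2) => p.
split => [[/Y1E | /Y2E] VGp | VGp].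
- by apply: VG_comm_system; left.
- by apply: VG_comm_system; right.
- by case: (VG_comm_system_union VGp) => [/Y1E Y1p | /Y2E Y2p]; [left | right].
Qed.

End NoZeroDivisors.

End LAStructure.

Theorem theorem3 (G : group) (A : (G -> G) -> Prop) (hA : aut_subgroup A) :
  equational_domain A <->
  ~ (exists a b : G, a <> gone G /\ b <> gone G /\
       forall phi, A phi -> comm a (phi b) = gone G).
Proof.
split.
- by move=> ED [a [b [a1 [b1 ab1]]]]; apply: (not_equational_domain hA a1 b1 ab1).
- move=> noZD; apply: (equational_domain_of_no_zero_divisors hA) => a b a1 b1 ab1.
  by apply: noZD; exists a, b.
Qed.
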